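(* Let $X$ and $Y$ be Banach spaces, $C\in \mathcal{L}(X,Y)$, $(S_t)_{t\geq 0}$ a $C_0$-semigroup on $X$, $M \geq 1$ and $\omega \in \mathbb{R}$ such that $\lVert S_t \rVert \leq M e^{\omega t}$ for all $t \geq 0$, $\lambda^* \geq 0$, and $(P_\lambda)_{\lambda>\lambda^*}$ a family of bounded linear operators in $X$. Assume that there exist $d_0,d_1,\gamma_1 > 0$ such that \[ \forall x\in X \ \forall \lambda > \lambda^* \colon \quad \lVert P_\lambda x \rVert_{ X } \le d_0 e^{d_1 \lambda^{\gamma_1}} \lVert C P_\lambda x \rVert_{Y }, \] and that there exist $d_2\geq 1$ and $d_3,\gamma_2,\gamma_3, T>0$ with $\gamma_1<\gamma_2$ such that \[ \forall x\in X \ \forall \lambda > \lambda^* \ \forall t\in (0,T/2] \colon \quad \lVert (\mathrm{id}-P_\lambda) S_t x \rVert_{X} \le d_2 e^{-d_3 \lambda^{\gamma_2} t^{\gamma_3}} \lVert x \rVert_{X}. \] Then for all $r\in[1,\infty]$ and all $x \in X$, \[ \lVert S_T x \rVert_{X} \leq C_{\mathrm{obs}} \lVert CS_{(\cdot)}x \rVert_{L_r ((0,T);Y)} \quad\text{with}\quad C_{\mathrm{obs}} = \frac{C_1}{T^{1/r}} \exp \left(\frac{C_2}{T^{\frac{\gamma_1 \gamma_3}{\gamma_2 - \gamma_1}}} + C_3 T\right), \] where $T^{1/r} = 1$ if $r=\infty$, and \begin{align*} C_1 &= (4 M d_0) \max \Bigl\{\left( (4d_2 M^2) (d_0 \lVert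 C \rVert_{\mathcal{L} (X,Y)}+1) \right)^{8/(e \ln 2)}, e^{4d_1\left(2\lambda^*\right)^{\gamma_1}}\Bigr\}, \\ C_2 &= 4 \bigl(2^{\gamma_1} (2\cdot 4^{\gamma_3})^\frac{\gamma_1 \gamma_2}{\gamma_2-\gamma_1} d_1^{\gamma_2} / d_3^{\gamma_1} \bigr)^{\frac{1}{\gamma_2-\gamma_1}} , \\ C_3 & = \max\{\omega , 0\} \bigl(1 + 10 / (e \ln 2) \bigr). \end{align*}
   Context: $\mathcal{L}(V,W)$ denotes the space of bounded linear operators between normed spaces $V$ and $W$. For $r=\infty$ the norm $\lVert CS_{(\cdot)}x \rVert_{L_\infty((0,T);Y)}$ is $\operatorname{ess\,sup}_{\tau\in[0,T]}\lVert CS_\tau x\rVert_Y$, and for $r<\infty$ it is $(\int_0^T \lVert C S_\tau x\rVert_Y^r\,d\tau)^{1/r}$. *)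

From HB Require Import structures.
From mathcomp Require Import all_boot all_order all_algebra.
From mathcomp Require Import all_classical all_reals all_analysis.
Set Implicit Arguments. Unset Strict Implicit. Unset Printing Implicit Defensive.
Import Order.TTheory GRing.Theory Num.Theory.
Import numFieldNormedType.Exports.
Local Open Scope classical_set_scope.
Local Open Scope ring_scope.

Definition bounded_op {R : realType} {V W : normedModType R} (f : V -> W) : Prop :=
  exists k : R, forall x, `|f x| <= k * `|x|.

Definition opnorm {R : realType} {V W : normedModType R} (f : V -> W) : R :=
  inf [set c : R | 0 <= c /\ forall x, `|f x| <= c * `|x|].

(* (S_t)_{t >= 0} is a C_0-semigroup on X (values for t < 0 are irrelevant). *)
Definition C0_semigroup {R : realType} {X : normedModType R}
  (S : R -> {linear X -> X}) : Prop :=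
  [/\ forall t, 0 <= t -> bounded_op (S t),
      forall x, S 0 x = x,
      forall s t x, 0 <= s -> 0 <= t -> S (s + t) x = S s (S t x)
    & forall x, S t x @[t --> 0^'+] --> x].

Definition Tpow {R : realType} (T : R) (r : \bar R) : R :=
  match r with
  | r'%:E => T `^ r'^-1
  | _ => 1
  end.

Definition leb0T {R : realType} (T : R) :=
  mrestr (@lebesgue_measure R) (measurable_itv `]0, T[).

From HB Require Import structures.
From mathcomp Require Import all_boot all_order all_algebra.
From mathcomp Require Import all_classical all_reals all_analysis.
From mathcomp Require Import ess_sup_inf.
From mathcomp Require Import ring lra.
Set Implicit Arguments. Unset Strict Implicit. Unset Printing Implicit Defensive.
Import Order.TTheory GRing.Theory Num.Theory.
Import numFieldNormedType.Exports.
Import HBNNSimple.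
Local Open Scope classical_set_scope.
Local Open Scope ring_scope.

(* Split x = P_l x + (x - P_l x): the observability estimate for P_l and the decay of
   x - P_l x along the semigroup give, on the dyadic interval (T/2^(k+1), T/2^k),
   |S(T/2^k) x| <= cost_k * (mean of |C S(.) x|) + e^(u_k - u_(k+1)) / 4 * |S(T/2^(k+1)) x|
   once the frequency l_k is chosen with d1 l_k^g1 = u_k and u_k = u_0 2^(b k) grows
   geometrically; since g1 < g2 the decay e^(-d3 l_k^g2 (T/2^(k+2))^g3) beats this cost.
   Telescoping the inequalities over k yields the observability constant. *)

Section operator_norm.
Variables (R : realType) (V W : normedModType R) (f : V -> W).
Hypothesis f_bounded : bounded_op f.

Let opnorm_set := [set c : R | 0 <= c /\ forall x, `|f x| <= c * `|x|].

Let opnorm_set_neq0 : opnorm_set !=set0.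
Proof.
case: f_bounded => k fk; exists (Num.max k 0); split; first by rewrite le_max lexx orbT.
by move=> x; apply: le_trans (fk x) _; apply: ler_wpM2r => //; rewrite le_max lexx.
Qed.

Lemma opnorm_ge0 : 0 <= opnorm f.
Proof. by apply: lb_le_inf opnorm_set_neq0 _ => c []. Qed.

Lemma opnorm_le x : `|f x| <= opnorm f * `|x|.
Proof.
have [x0|x0] := eqVneq `|x| 0.
  by case: opnorm_set_neq0 => c [_ /(_ x)]; rewrite x0 !mulr0.
have xp : 0 < `|x| by rewrite lt_neqAle eq_sym x0 normr_ge0.
rewrite -ler_pdivrMr //; apply: lb_le_inf opnorm_set_neq0 _ => c [_ /(_ x)].
by rewrite ler_pdivrMr.
Qed.

End operator_norm.

Lemma ess_sup_ge_on d (T : measurableType d) (R : realType)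
    (mu : {measure set T -> \bar R}) (f : T -> \bar R) (I : set T) (m : \bar R) :
  measurable I -> (0 < mu I)%E -> (forall x, I x -> (m <= f x)%E) ->
  (m <= ess_sup mu f)%E.
Proof.
move=> mI muI mf; rewrite ess_supEae; apply/ereal_infP => y [A [mA muA0 notfyA]].
rewrite leNgt; apply/negP => ym.
have IA : I `<=` A.
  by move=> s Is; apply: notfyA => /= fsy; move: (lt_le_trans ym (mf _ Is)); rewrite ltNge fsy.
have : (mu I <= mu A)%E by apply: le_measure; rewrite ?inE.
by rewrite muA0 leNgt muI.
Qed.

Lemma Tpow_gt0 (R : realType) (T : R) (r : \bar R) : 0 < T -> 0 < Tpow T r.
Proof. by case: r => [p| |] T0 //=; exact: powR_gt0. Qed.

Section restricted_lebesgue.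
Variables (R : realType) (T : R).

Lemma leb0T_itv c l : 0 < l -> 0 <= c -> c + l <= T ->
  leb0T T [set` `]c, c + l[] = l%:E.
Proof.
move=> l0 c0 clT; rewrite /leb0T /= /mrestr setIidl; last first.
  move=> s /=; rewrite !in_itv /= => /andP[cs slt]; apply/andP; split.
    exact: le_lt_trans cs.
  exact: lt_le_trans clT.
rewrite lebesgue_measure_itv /= lte_fin ltrDl l0 -EFinD.
by congr (_%:E); rewrite addrAC subrr add0r.
Qed.

Lemma integral_powR_ge_on_itv (c l m p : R) (g : R -> R) :
  0 < l -> 0 <= c -> c + l <= T -> 0 <= m -> 0 <= p ->
  (forall s, c < s -> s < c + l -> m <= g s) ->
  ((m `^ p * l)%:E <= \int[leb0T T]_s (`|(g s)%:E| `^ p)%E)%E.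
Proof.
move=> l0 c0 clT m0 p0 mg.
have mI : measurable ([set` `]c, c + l[] : set (measurableTypeR R)) := measurable_itv _.
rewrite ge0_integralE; last by move=> s _; exact: poweR_ge0.
apply: ereal_sup_ubound => /=.
exists (@scale_nnsfun _ _ R (@indic_nnsfun _ _ R _ mI) _ (powR_ge0 m p)).
  move=> s /=; rewrite patch_setT /= /measurable_realfun.mindic indicE.
  case: (boolP (s \in _)) => sI; last by rewrite mulr0 lee_fin powR_ge0.
  rewrite mulr1 lee_fin; apply: ge0_ler_powR => //.
  move: sI; rewrite inE /= in_itv /= => /andP[cs slt].
  exact: le_trans (mg _ cs slt) (ler_norm _).
rewrite sintegralrM sintegral_indic EFinM.
by congr (_ * _)%E; exact: leb0T_itv.
Qed.

Lemma Lnorm_ge_on_itv (r : \bar R) (g : R -> R) (c l m : R) :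
  (1 <= r)%E -> 0 < l -> 0 <= c -> c + l <= T -> 0 <= m ->
  (forall s, c < s -> s < c + l -> m <= g s) ->
  ((m * Tpow T r)%:E <= (T / l)%:E * Lnorm (leb0T T) r (fun s => (g s)%:E))%E.
Proof.
move=> r1 l0 c0 clT m0 mg.
have T0 : 0 < T by apply: lt_le_trans clT; rewrite ltr_pwDr.
have Tl1 : 1 <= T / l by rewrite ler_pdivlMr // mul1r; apply: le_trans clT; rewrite lerDr.
case: r r1 => [p| |] //= p1.
- rewrite lee_fin in p1; have p0 : 0 < p by apply: lt_le_trans p1.
  rewrite unlock /=.
  have int_ge := integral_powR_ge_on_itv l0 c0 clT m0 (ltW p0) mg.
  have : (((m `^ p * l) `^ p^-1)%:E <=
      (\int[leb0T T]_s (`|(g s)%:E| `^ p)%E) `^ p^-1)%E.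
    rewrite -poweR_EFin; apply: gt0_ler_poweR => //.
    - by rewrite invr_ge0 ltW.
    - by rewrite in_itv /= leey andbT lee_fin mulr_ge0 ?powR_ge0 ?ltW.
    - by rewrite in_itv /= leey andbT; apply: integral_ge0 => s _; rewrite lee_fin; exact: powR_ge0.
  move=> /(lee_wpmul2l (_ : (0 <= (T / l)%:E)%E)) norm_ge; apply: le_trans (norm_ge _).
    have -> : (m `^ p * l) `^ p^-1 = m * l `^ p^-1.
      by rewrite powRM ?powR_ge0 ?ltW // -powRrM mulfV ?gt_eqF // powRr1.
    have -> : T `^ p^-1 = (T / l) `^ p^-1 * l `^ p^-1.
      by rewrite -powRM ?divfK ?gt_eqF ?divr_ge0 ?ltW.
    rewrite -EFinM lee_fin mulrCA ler_wpM2r ?mulr_ge0 ?powR_ge0 //.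
    by apply: ler1_powR => //; rewrite invf_le1.
  by rewrite lee_fin divr_ge0 ?ltW.
- rewrite unlock /= ifT ?mulr1; last first.
    by rewrite /mrestr /= setTI lebesgue_measure_itv /= lte_fin T0 oppr0 adde0 lte_fin.
  have m_le : (m%:E <= ess_sup (leb0T T) (abse \o (fun s => (g s)%:E)))%E.
    apply: (@ess_sup_ge_on _ _ R (leb0T T) _ [set` `]c, c + l[]).
    - exact: measurable_itv.
    - apply: (@lt_le_trans _ _ l%:E); rewrite ?lte_fin // le_eqVlt; apply/orP; left.
      by apply/eqP; symmetry; exact: leb0T_itv.
    move=> s /=; rewrite in_itv /= => /andP[cs slt].
    by rewrite lee_fin (le_trans (mg _ cs slt)) // ler_norm.
  apply: (le_trans m_le); apply: lee_pemull; last by rewrite lee_fin.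
  by apply: le_trans m_le; rewrite lee_fin.
Qed.

Lemma le_Lnorm_on_itv (r : \bar R) (g : R -> R) (c l N alpha beta Lr : R) :
  (1 <= r)%E -> 0 < l -> 0 <= c -> c + l <= T -> 0 < alpha ->
  Lnorm (leb0T T) r (fun s => (g s)%:E) = Lr%:E ->
  (forall s, c < s -> s < c + l -> N <= alpha * g s + beta) ->
  N <= alpha * (T / l) * (Lr / Tpow T r) + beta.
Proof.
move=> r1 l0 c0 clT alpha0 gLr Ng.
have T0 : 0 < T by apply: lt_le_trans clT; rewrite ltr_pwDr.
have Lr0 : 0 <= Lr by rewrite -lee_fin -gLr Lnorm_ge0.
rewrite -lerBlDr; have [Nb|Nb] := leP (N - beta) 0.
  apply: le_trans Nb _; rewrite mulr_ge0 ?divr_ge0 ?(ltW (Tpow_gt0 r T0)) //.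
  by rewrite mulr_ge0 ?divr_ge0 ?ltW.
have m_le s : c < s -> s < c + l -> (N - beta) / alpha <= g s.
  by move=> cs slt; rewrite ler_pdivrMr // lerBlDr mulrC; exact: Ng.
have := Lnorm_ge_on_itv r1 l0 c0 clT (divr_ge0 (ltW Nb) (ltW alpha0)) m_le.
rewrite gLr -EFinM lee_fin [(N - beta) / alpha]mulrC => Lnorm_ge.
by rewrite -mulrA -ler_pdivrMl // mulrA ler_pdivlMr ?Tpow_gt0.
Qed.

End restricted_lebesgue.

Lemma expR1_ln2_le4 (R : realType) : expR (1 : R) * ln 2 <= 4.
Proof.
have expR_half : expR (2^-1 : R) <= 2.
  have := expR_ge1Dx (- 2^-1 : R).
  rewrite expRN (_ : 1 + - 2^-1 = 2^-1 :> R); last by field.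
  by rewrite lef_pV2 ?posrE ?expR_gt0.
have ln2_le1 : ln (2 : R) <= 1 by have := @le_ln1Dx R 1; rewrite -[1 + 1]/2; apply; lra.
have ln2_gt0 : 0 < ln (2 : R) by rewrite ln_gt0 // ltr1n.
rewrite [X in expR X](splitr 1) mul1r expRD.
have := expR_gt0 (2^-1 : R); nra.
Qed.

Lemma le_add_geometric (R : realType) (x y c : R) :
  (forall N, x <= y + (2^-1) ^+ N * c) -> x <= y.
Proof.
move=> xy; have [c0|c_gt0] := leP c 0.
  by apply: le_trans (xy 0%N) _; rewrite expr0 mul1r gerDl.
apply/ler_addgt0Pr => e e0.
have := archi_boundP (divr_ge0 (ltW c_gt0) (ltW e0)).
set N := Num.Def.archi_bound _; rewrite ltr_pdivrMr // => cN.
apply: le_trans (xy N) _; rewrite lerD2l exprVn mulrC ler_pdivrMr ?exprn_gt0 //.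
apply: le_trans (ltW cN) _; rewrite mulrC ler_wpM2l ?(ltW e0) // -natrX ler_nat.
exact: ltnW (ltn_expl _ _).
Qed.

(* Induction on [N] propagates [n 0 <= A (1 - h) + h^2 e^(u 0 - u N) n N] with
   [h = 2^-N] and [A = 8 G e^(u 0) Y]; the last term vanishes as [N] grows. *)
Lemma dyadic_recursion_bound (R : realType) (n u : nat -> R) (G Y B : R) :
  0 <= G -> 0 <= Y -> (forall k, 0 <= n k <= B) -> (forall k, 0 <= u k) ->
  (forall k, n k <= G * expR (u k) * 2 ^+ k.+2 * Y
                    + 4^-1 * expR (u k - u k.+1) * n k.+1) ->
  n 0 <= 8 * G * expR (u 0) * Y.
Proof.
move=> G0 Y0 nB u0 n_rec; set A := 8 * G * expR (u 0) * Y.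
have invariant N : n 0 <= A * (1 - (2^-1) ^+ N)
                          + ((2^-1) ^+ N) ^+ 2 * expR (u 0 - u N) * n N.
  elim: N => [|N IH].
    by rewrite expr0 subrr mulr0 add0r expr1n mul1r subrr expR0 mul1r.
  apply: (le_trans IH); rewrite [(2^-1) ^+ N.+1]exprS.
  have h0 : 0 < (2^-1 : R) ^+ N by rewrite exprn_gt0 // invr_gt0.
  set h := (2^-1) ^+ N in h0 *.
  have step := ler_wpM2l (mulr_ge0 (exprn_ge0 2 (ltW h0)) (expR_ge0 (u 0 - u N))) (n_rec N).
  apply: le_trans (lerD (lexx _) step) _.
  have pow2N : 2 ^+ N = h^-1 by rewrite /h exprVn invrK.
  have e1 : expR (u 0 - u N) * expR (u N) = expR (u 0) by rewrite -expRD subrK.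
  have e2 : expR (u 0 - u N) * expR (u N - u N.+1) = expR (u 0 - u N.+1).
    by rewrite -expRD addrA subrK.
  rewrite -e2 /A -e1 !exprS pow2N le_eqVlt; apply/orP; left; apply/eqP.
  by field; rewrite gt_eqF.
apply: (@le_add_geometric _ _ _ (expR (u 0) * B)) => N.
have h0 : 0 < (2^-1 : R) ^+ N by rewrite exprn_gt0 // invr_gt0.
have h1 : (2^-1 : R) ^+ N <= 1 by rewrite exprn_ile1 // ?invr_ge0 // invf_le1 // ler1n.
apply: le_trans (invariant N) _; apply: lerD.
  by rewrite ler_piMr ?lerBlDr ?lerDl ?(ltW h0) // /A !mulr_ge0 ?expR_ge0.
have [n0 nNB] := andP (nB N).
have weighted_nN : expR (u 0 - u N) * n N <= expR (u 0) * B.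
  by rewrite ler_pM ?expR_ge0 // ler_expR lerBlDr lerDl.
rewrite expr2 -!mulrA ler_wpM2l ?(ltW h0) //; apply: le_trans weighted_nN.
by rewrite ler_piMl ?mulr_ge0 ?expR_ge0.
Qed.

Local Ltac positivity :=
  rewrite ?posrE; by do ?[apply: exprn_gt0 | apply: powR_gt0 | apply: expR_gt0
                         | apply: divr_gt0 | apply: mulr_gt0].

(* After taking logarithms the dependence on [k] cancels, since [(g2 / g1 - 1) b = g3]. *)
Lemma dyadic_exponent_bound (R : realType) (d1 d3 g1 g2 g3 T u : R) (k : nat) :
  0 < d1 -> 0 < d3 -> 0 < g1 -> g1 < g2 -> 0 < g3 -> 0 < T ->
  let b := g1 * g3 / (g2 - g1) in
  let v := u * (2 `^ b) ^+ k in
  4 * (2 `^ g1 * (2 * 4 `^ g3) `^ (g1 * g2 / (g2 - g1)) * d1 `^ g2 / d3 `^ g1)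
      `^ (1 / (g2 - g1)) / T `^ b <= u ->
  2 * 2 `^ b * v <= d3 * (v / d1) `^ (1 / g1) `^ g2 * (T / 2 ^+ k.+2) `^ g3.
Proof.
move=> d1_gt0 d3_gt0 g1_gt0 g12 g3_gt0 T_gt0 b v.
set inner := _ / d3 `^ g1; set C2 := 4 * _ `^ _ => C2_le_u.
have g21_gt0 : 0 < g2 - g1 by rewrite subr_gt0.
have g2_gt0 : 0 < g2 by apply: lt_trans g12.
have ln2_gt0 : 0 < ln (2 : R) by rewrite ln_gt0 // ltr1n.
have ln4 : ln (4 : R) = 2 * ln 2.
  by rewrite (_ : 4 = 2 ^+ 2) ?lnXn // ?mulr_natl // expr2; ring.
have C2_gt0 : 0 < C2 by positivity.
have u_gt0 : 0 < u by apply: lt_le_trans C2_le_u; rewrite divr_gt0 ?powR_gt0.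
have v_gt0 : 0 < v by positivity.
have ln_u : ln C2 - b * ln T <= ln u.
  by rewrite -ln_powR -ln_div ?posrE ?powR_gt0 // ler_ln ?posrE ?divr_gt0 ?powR_gt0.
have ln_C2 : ln C2 = 2 * ln 2 + 1 / (g2 - g1) * (g1 * ln 2 +
      g1 * g2 / (g2 - g1) * (ln 2 + g3 * (2 * ln 2)) + g2 * ln d1 - g1 * ln d3).
  by rewrite /C2 /inner; do 4 rewrite ?ln_powR ?ln_div ?lnM ?ln4; [ring | positivity..].
have ln_v : ln v = ln u + k%:R * (b * ln 2).
  rewrite /v ?lnM ?lnXn ?ln_powR; [by rewrite mulr_natl | positivity..].
set t := T / 2 ^+ k.+2.
have ln_t : ln t = ln T - (k%:R + 2) * ln 2.
  rewrite ln_div ?lnXn; [by rewrite !mulrSr -mulr_natl; ring | positivity..].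
have t_gt0 : 0 < t by positivity.
clearbody t v.
rewrite -ler_ln; [|positivity..].
rewrite !lnM ?ln_powR ?ln_div; [|positivity..].
rewrite -subr_ge0 [X in 0 <= X](_ : _ = (g2 - g1) / g1 * (ln u - (ln C2 - b * ln T))
    + ln 2 * (2 * (g2 - g1) / g1 + g2 / (g2 - g1) + g3 * g1 / (g2 - g1))).
  have g1_ge0 := ltW g1_gt0; have g2_ge0 := ltW g2_gt0.
  have g3_ge0 := ltW g3_gt0; have g21_ge0 := ltW g21_gt0.
  apply: addr_ge0; apply: mulr_ge0.
  - exact: divr_ge0.
  - by rewrite subr_ge0.
  - exact: ltW.
  - by rewrite !addr_ge0 // !divr_ge0 // mulr_ge0.
by rewrite ln_v ln_t ln_C2 /b; field; rewrite !gt_eqF.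
Qed.

Section observability.
Variables (R : realType) (X Y : normedModType R) (C : {linear X -> Y})
  (S P : R -> {linear X -> X}) (M w lstar d0 d1 g1 d2 d3 g2 g3 T nC : R).
Hypothesis nC_ge0 : 0 <= nC.
Hypothesis C_le : forall z, `|C z| <= nC * `|z|.
Hypothesis S_add : forall (s t : R) x, 0 <= s -> 0 <= t -> S (s + t) x = S s (S t x).
Hypothesis S_le : forall t : R, 0 <= t -> forall x, `|S t x| <= M * expR (w * t) * `|x|.
Hypotheses (M_ge1 : 1 <= M) (d0_gt0 : 0 < d0) (d1_gt0 : 0 < d1) (d2_ge1 : 1 <= d2).
Hypotheses (d3_gt0 : 0 < d3) (g1_gt0 : 0 < g1) (g12 : g1 < g2) (g3_gt0 : 0 < g3).
Hypotheses (T_gt0 : 0 < T) (lstar_ge0 : 0 <= lstar).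
Hypothesis P_obs : forall x l, lstar < l ->
  `|P l x| <= d0 * expR (d1 * l `^ g1) * `|C (P l x)|.
Hypothesis P_tail : forall x l (t : R), lstar < l -> 0 < t -> t <= T / 2 ->
  `|S t x - P l (S t x)| <= d2 * expR (- (d3 * l `^ g2 * t `^ g3)) * `|x|.

Let mu := Num.max w 0.
Let K := d2 * (d0 * nC + 1).

Let M_ge0 : 0 <= M. Proof. exact: le_trans ler01 M_ge1. Qed.
Let mu_ge0 : 0 <= mu. Proof. by rewrite le_max lexx orbT. Qed.
Let K_ge1 : 1 <= K.
Proof. by rewrite mulr_ege1 // lerDr mulr_ge0 // ltW. Qed.
Let K_ge0 : 0 <= K. Proof. exact: le_trans ler01 K_ge1. Qed.

Lemma norm_le_obs_defect z l : lstar < l ->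
  `|z| <= d0 * expR (d1 * l `^ g1) * `|C z|
          + expR (d1 * l `^ g1) * (d0 * nC + 1) * `|z - P l z|.
Proof.
move=> l_gt; set E := expR _; set del := `|z - P l z|.
have E_ge1 : 1 <= E by rewrite -expR0 ler_expR mulr_ge0 ?powR_ge0 ?ltW.
have z_le : `|z| <= `|P l z| + del.
  by have := ler_normD (P l z) (z - P l z); rewrite addrC subrK.
have CPz_le : `|C (P l z)| <= `|C z| + nC * del.
  have -> : C (P l z) = C z - C (z - P l z) by rewrite linearB opprB addrC subrK.
  by apply: le_trans (ler_normB _ _) _; rewrite lerD2l.
have Pz_le := le_trans (P_obs z l_gt)
  (ler_wpM2l (mulr_ge0 (ltW d0_gt0) (expR_ge0 _)) CPz_le).
have del_le : del <= E * del := ler_peMl (normr_ge0 _) E_ge1.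
apply: le_trans z_le _.
rewrite [X in _ <= X](_ : _ = d0 * E * (`|C z| + nC * del) + E * del); last by ring.
exact: lerD Pz_le del_le.
Qed.

Lemma norm_S_le (t t' : R) z : 0 <= t -> t <= t' -> `|S t z| <= M * expR (mu * t') * `|z|.
Proof.
move=> t0 tt'; apply: le_trans (S_le t0 z) _.
rewrite ler_wpM2r // ler_wpM2l // ler_expR.
by apply: le_trans (ler_wpM2l mu_ge0 tt'); rewrite ler_wpM2r // le_max lexx.
Qed.

Lemma S_step_le x (a tau s l : R) : 0 <= a -> 0 < tau -> tau <= T / 2 -> lstar < l ->
  a + tau / 2 <= s -> s <= a + tau ->
  `|S (a + tau) x| <= M * expR (mu * tau) *
    (d0 * expR (d1 * l `^ g1) * `|C (S s x)|
     + K * expR (d1 * l `^ g1) * expR (- (d3 * l `^ g2 * (tau / 2) `^ g3)) * `|S a x|).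
Proof.
move=> a0 tau0 tauT l_gt s_ge s_le.
have sa_ge : tau / 2 <= s - a by rewrite lerBrDl.
have sa_gt0 : 0 < s - a by apply: lt_le_trans sa_ge; rewrite divr_gt0.
have S_s : S s x = S (s - a) (S a x) by rewrite -S_add ?subrK // ltW.
have growth : `|S (a + tau) x| <= M * expR (mu * tau) * `|S s x|.
  by rewrite -(subrK s (a + tau)) S_add; [apply: norm_S_le | ..]; lra.
apply: le_trans growth _; rewrite ler_wpM2l ?mulr_ge0 ?expR_ge0 //.
apply: le_trans (norm_le_obs_defect (S s x) l_gt) _; rewrite lerD2l.
have sa_le : s - a <= T / 2 by lra.
have := P_tail (S a x) l_gt sa_gt0 sa_le; rewrite -S_s => tail.
apply: le_trans (ler_wpM2l _ tail) _.
  by rewrite mulr_ge0 ?expR_ge0 // addr_ge0 // mulr_ge0 // ltW.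
rewrite [X in X <= _](_ : _ = K * expR (d1 * l `^ g1)
    * expR (- (d3 * l `^ g2 * (s - a) `^ g3)) * `|S a x|); last by rewrite /K; ring.
rewrite ler_wpM2r // ler_wpM2l ?(mulr_ge0 K_ge0 (expR_ge0 _)) //.
rewrite ler_expR lerN2 ler_wpM2l ?mulr_ge0 ?powR_ge0 ?(ltW d3_gt0) //.
by apply: ge0_ler_powR; rewrite ?nnegrE; [exact: ltW | lra..].
Qed.

Lemma S_Lnorm_step x (a tau l : R) r (Lr : R) :
  0 <= a -> 0 < tau -> tau <= T / 2 -> lstar < l -> a + tau <= T -> (1 <= r)%E ->
  Lnorm (leb0T T) r (fun t => (`|C (S t x)|)%:E) = Lr%:E ->
  `|S (a + tau) x| <=
    M * expR (mu * tau) * d0 * expR (d1 * l `^ g1) * (T / (tau / 2)) * (Lr / Tpow T r)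
    + M * expR (mu * tau) * K * expR (d1 * l `^ g1)
      * expR (- (d3 * l `^ g2 * (tau / 2) `^ g3)) * `|S a x|.
Proof.
move=> a0 tau0 tauT l_gt aT r1 L_eq.
have tau2_gt0 : 0 < tau / 2 by rewrite divr_gt0.
have alpha_gt0 : 0 < M * expR (mu * tau) * d0 * expR (d1 * l `^ g1).
  by rewrite !mulr_gt0 ?expR_gt0 // (lt_le_trans ltr01).
apply: (le_Lnorm_on_itv (c := a + tau / 2) r1 tau2_gt0 _ _ alpha_gt0 L_eq); [lra | lra |].
move=> s s_gt s_lt.
by apply: le_trans (S_step_le (s := s) x a0 tau0 tauT l_gt _ _) _; rewrite ?mulrDr ?mulrA; lra.
Qed.

Let b := g1 * g3 / (g2 - g1).
Let C2 := 4 * (2 `^ g1 * (2 * 4 `^ g3) `^ (g1 * g2 / (g2 - g1))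
               * d1 `^ g2 / d3 `^ g1) `^ (1 / (g2 - g1)).
Let c := ln (4 * (M * K) * expR (mu * T)).
Let u0 := Num.max (C2 / T `^ b) (Num.max c (2 * d1 * lstar `^ g1)).
Let u k := u0 * (2 `^ b) ^+ k.
Let lam k := (u k / d1) `^ (1 / g1).

Let MK_ge1 : 1 <= M * K. Proof. exact: mulr_ege1. Qed.

Let c_gt0 : 0 < c.
Proof.
have ge4 : 4 <= 4 * (M * K) * expR (mu * T).
  by rewrite -mulrA ler_peMr // mulr_ege1 // -expR0 ler_expR mulr_ge0 // ltW.
by rewrite /c; apply: ln_gt0; apply: lt_le_trans ge4; rewrite ltr1n.
Qed.

Let expR_c : expR c = 4 * (M * K) * expR (mu * T).
Proof.
have MK_gt0 : 0 < M * K := lt_le_trans ltr01 MK_ge1.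
by apply: lnK; rewrite posrE; apply: (mulr_gt0 _ (expR_gt0 _)); apply: mulr_gt0 MK_gt0.
Qed.

Let u0_ge_lstar : 2 * (d1 * lstar `^ g1) <= u0.
Proof. by rewrite mulrA !le_max lexx !orbT. Qed.

Let pow2b_ge1 : 1 <= 2 `^ b.
Proof.
have b_ge0 : 0 <= b by rewrite divr_ge0 ?mulr_ge0 ?subr_ge0 // ltW.
by have := ler_powR (ler1n R 2) b_ge0; rewrite powRr0.
Qed.

Let u_ge k : u0 <= u k.
Proof.
rewrite ler_peMr ?exprn_ege1 //.
by apply: le_trans (ltW c_gt0) _; rewrite !le_max lexx orbT.
Qed.

Let u_gt0 k : 0 < u k.
Proof. by apply: lt_le_trans c_gt0 (le_trans _ (u_ge k)); rewrite !le_max lexx orbT. Qed.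

Let d1_lam k : d1 * lam k `^ g1 = u k.
Proof.
rewrite -powRrM mul1r mulVf ?gt_eqF // powRr1 ?divr_ge0 ?(ltW (u_gt0 k)) ?(ltW d1_gt0) //.
by rewrite mulrC divfK ?gt_eqF.
Qed.

Let lstar_lt_lam k : lstar < lam k.
Proof.
have -> : lstar = (lstar `^ g1) `^ (1 / g1) by rewrite -powRrM mul1r mulfV ?gt_eqF // powRr1.
apply: gt0_ltr_powR; rewrite ?nnegrE ?powR_ge0 ?divr_gt0 //.
  by rewrite divr_ge0 // ltW ?u_gt0.
rewrite ltr_pdivlMr // mulrC; have := le_trans u0_ge_lstar (u_ge k); have := u_gt0 k.
set z := d1 * _; lra.
Qed.

Let lam_exponent_ge k :
  c + u k.+1 <= d3 * lam k `^ g2 * (T / 2 ^+ k.+2) `^ g3.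
Proof.
have := @dyadic_exponent_bound R d1 d3 g1 g2 g3 T u0 k d1_gt0 d3_gt0 g1_gt0 g12 g3_gt0 T_gt0.
rewrite /= -/b -/C2 -/(u k) -/(lam k) le_max lexx => /(_ isT); apply: le_trans.
have c_le : c <= u k by apply: le_trans (u_ge k); rewrite !le_max lexx orbT.
have u_le : u k <= 2 `^ b * u k := ler_peMl (ltW (u_gt0 k)) pow2b_ge1.
rewrite (_ : u k.+1 = 2 `^ b * u k); last by rewrite /u exprS mulrCA.
lra.
Qed.

Let tail_coef_le k (D : R) : c + u k.+1 <= D ->
  M * expR (mu * T) * K * expR (u k) * expR (- D) <= 4^-1 * expR (u k - u k.+1).
Proof.
move=> D_ge; have -> : M * expR (mu * T) * K = 4^-1 * expR c by rewrite expR_c; field.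
rewrite -!mulrA -!expRD ler_wpM2l ?invr_ge0 // ler_expR; lra.
Qed.

Lemma dyadic_step k x r Lr : (1 <= r)%E ->
  Lnorm (leb0T T) r (fun t => (`|C (S t x)|)%:E) = Lr%:E ->
  `|S (T / 2 ^+ k) x| <=
    M * d0 * expR (mu * T) * expR (u k) * 2 ^+ k.+2 * (Lr / Tpow T r)
    + 4^-1 * expR (u k - u k.+1) * `|S (T / 2 ^+ k.+1) x|.
Proof.
move=> r1 L_eq; set tau := T / 2 ^+ k.+1.
have tau_gt0 : 0 < tau by rewrite divr_gt0 ?exprn_gt0.
have tau_tau : tau + tau = T / 2 ^+ k by rewrite /tau exprS; field; rewrite expf_neq0.
have tauT : tau <= T / 2.
  rewrite /tau ler_wpM2l ?(ltW T_gt0) // lef_pV2 ?posrE ?exprn_gt0 //.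
  by rewrite exprS ler_peMr // exprn_ege1 // ler1n.
have tau2 : tau / 2 = T / 2 ^+ k.+2 by rewrite /tau [in RHS]exprS invfM mulrA mulrAC.
have := S_Lnorm_step (ltW tau_gt0) tau_gt0 tauT (lstar_lt_lam k) _ r1 L_eq.
rewrite tau_tau d1_lam tau2 (_ : T / (T / 2 ^+ k.+2) = 2 ^+ k.+2); last first.
  by rewrite invf_div mulrCA divff ?gt_eqF // mulr1.
have Tk_le : T / 2 ^+ k <= T.
  by rewrite ler_pdivrMr ?exprn_gt0 // ler_peMr ?(ltW T_gt0) // exprn_ege1 // ler1n.
move=> /(_ Tk_le) step; apply: le_trans step _.
have e_tau : expR (mu * tau) <= expR (mu * T).
  by rewrite ler_expR ler_wpM2l //; lra.
have Lr_ge0 : 0 <= Lr by rewrite -lee_fin -L_eq Lnorm_ge0.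
apply: lerD.
  set W := M * d0 * expR (u k) * 2 ^+ k.+2 * (Lr / Tpow T r).
  have W_ge0 : 0 <= W.
    apply: mulr_ge0; last by rewrite divr_ge0 // ltW // Tpow_gt0.
    by rewrite mulr_ge0 ?exprn_ge0 // !mulr_ge0 ?expR_ge0 ?(ltW d0_gt0).
  rewrite [X in X <= _](_ : _ = W * expR (mu * tau)); last by rewrite /W; ring.
  rewrite [X in _ <= X](_ : _ = W * expR (mu * T)); last by rewrite /W; ring.
  by rewrite ler_wpM2l.
rewrite ler_wpM2r //; apply: le_trans (tail_coef_le (lam_exponent_ge k)).
by rewrite !ler_wpM2r ?expR_ge0 ?K_ge0 // ler_wpM2l ?M_ge0.
Qed.

Lemma norm_S_T_le x r Lr : (1 <= r)%E ->
  Lnorm (leb0T T) r (fun t => (`|C (S t x)|)%:E) = Lr%:E ->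
  `|S T x| <= 8 * (M * d0 * expR (mu * T)) * expR u0 * (Lr / Tpow T r).
Proof.
move=> r1 L_eq.
have Lr_ge0 : 0 <= Lr by rewrite -lee_fin -L_eq Lnorm_ge0.
have n_bounded k : 0 <= `|S (T / 2 ^+ k) x| <= M * expR (mu * T) * `|x|.
  rewrite normr_ge0 norm_S_le ?divr_ge0 ?exprn_ge0 ?(ltW T_gt0) //.
  by rewrite ler_pdivrMr ?exprn_gt0 // ler_peMr ?(ltW T_gt0) // exprn_ege1 // ler1n.
have := dyadic_recursion_bound _ _ n_bounded (fun k => ltW (u_gt0 k))
  (fun k => dyadic_step k r1 L_eq).
rewrite expr0 divr1 /u expr0 mulr1; apply; first by rewrite !mulr_ge0 ?expR_ge0 ?(ltW d0_gt0).
by rewrite divr_ge0 // ltW // Tpow_gt0.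
Qed.

Let C1 := 4 * M * d0 *
  Num.max ((4 * d2 * M ^+ 2 * (d0 * nC + 1)) `^ (8 / (expR 1 * ln 2)))
          (expR (4 * d1 * (2 * lstar) `^ g1)).
Let C3 := mu * (1 + 10 / (expR 1 * ln 2)).

(* [8 / (e ln 2) >= 2] and [10 / (e ln 2) >= 1] are all that is used of these exponents. *)
Let max_c_lstar_le :
  2 * expR (mu * T) * expR (Num.max c (2 * d1 * lstar `^ g1))
  <= Num.max ((4 * d2 * M ^+ 2 * (d0 * nC + 1)) `^ (8 / (expR 1 * ln 2)))
             (expR (4 * d1 * (2 * lstar) `^ g1)) * expR (C3 * T).
Proof.
set q := expR 1 * ln 2; set Z := 4 * d2 * M ^+ 2 * _; set E := expR (4 * _ * _).
have q_gt0 : 0 < q by rewrite mulr_gt0 ?expR_gt0 // ln_gt0 // ltr1n.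
have q_le4 : q <= 4 := expR1_ln2_le4 R.
have Z_eq : Z = 4 * M ^+ 2 * K by rewrite /Z /K; ring.
have M2_ge1 : 1 <= M ^+ 2 by rewrite exprn_ege1.
have Z_ge4 : 4 <= Z by rewrite Z_eq -mulrA ler_peMr ?ler0n // mulr_ege1.
have Zq_ge : Z ^+ 2 <= Z `^ (8 / q).
  rewrite -powR_mulrn ?(le_trans _ Z_ge4) // ler_powR ?(le_trans _ Z_ge4) ?ler1n //.
  by rewrite ler_pdivlMr //; lra.
have C3_ge : 2 * mu <= C3.
  rewrite /C3 -/q mulrC ler_wpM2l //; suff : 1 <= 10 / q by lra.
  by rewrite ler_pdivlMr //; lra.
have eT_le : expR (mu * T) * expR (mu * T) <= expR (C3 * T).
  by rewrite -expRD ler_expR -mulrDl ler_wpM2r ?(ltW T_gt0) //; lra.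
have eT_ge1 : 1 <= expR (mu * T) by rewrite -expR0 ler_expR mulr_ge0 ?(ltW T_gt0).
have [yc|cy] := leP (2 * d1 * lstar `^ g1) c.
- have MK_le : M * K <= M ^+ 2 * K by rewrite ler_wpM2r // expr2 ler_peMr.
  have X_ge : 8 * (M * K) <= Num.max (Z `^ (8 / q)) E.
    rewrite le_max (le_trans _ Zq_ge) // expr2.
    rewrite (_ : 8 * (M * K) = 4 * (2 * (M * K))); last by ring.
    apply: ler_pM => //; first by rewrite mulr_ge0 ?(le_trans ler01 MK_ge1).
    by rewrite Z_eq -mulrA; lra.
  rewrite expR_c (_ : _ * _ = 8 * (M * K) * (expR (mu * T) * expR (mu * T))); last by ring.
  by apply: ler_pM => //; rewrite mulr_ge0 // (le_trans ler01 MK_ge1).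
- set y := 2 * d1 * lstar `^ g1 in cy *.
  have y_ge : 2 * expR y <= Num.max (Z `^ (8 / q)) E.
    rewrite le_max; have [ey|ey] := leP (expR y) 2.
      by rewrite (le_trans _ (le_trans Z_ge4 (le_trans _ Zq_ge))) //; nra.
    have E_ge : expR (y + y) <= E.
      rewrite ler_expR (_ : y + y = 4 * d1 * lstar `^ g1); last by rewrite /y; ring.
      rewrite ler_wpM2l ?mulr_ge0 ?(ltW d1_gt0) //.
      by apply: ge0_ler_powR; rewrite ?nnegrE; [exact: ltW | move: lstar_ge0; lra..].
    by apply/orP; right; apply: le_trans E_ge; rewrite expRD ler_wpM2r ?expR_ge0 // ltW.
  rewrite (_ : _ * _ = 2 * expR y * expR (mu * T)); last by ring.
  rewrite ler_pM ?mulr_ge0 ?expR_ge0 // (le_trans _ eT_le) // ler_peMl ?expR_ge0 //.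
Qed.

Lemma dyadic_constant_le :
  8 * (M * d0 * expR (mu * T)) * expR u0 <= C1 * expR (C2 / T `^ b + C3 * T).
Proof.
pose A := C2 / T `^ b; pose m := Num.max c (2 * d1 * lstar `^ g1).
have A_ge0 : 0 <= A by rewrite divr_ge0 ?powR_ge0 // mulr_ge0 ?powR_ge0.
have m_ge0 : 0 <= m by rewrite le_max (ltW c_gt0).
have u0_le : expR u0 <= expR A * expR m.
  by rewrite /u0 -/A -/m -expRD ler_expR ge_max lerDl lerDr A_ge0 m_ge0.
have coef_ge0 : 0 <= 4 * M * d0 * expR A by rewrite !mulr_ge0 ?expR_ge0 ?(ltW d0_gt0).
apply: le_trans (_ : 8 * (M * d0 * expR (mu * T)) * (expR A * expR m) <= _).
  by rewrite ler_wpM2l // !mulr_ge0 ?expR_ge0 ?(ltW d0_gt0).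
rewrite (_ : _ * (_ * _) = 4 * M * d0 * expR A * (2 * expR (mu * T) * expR m)); last by ring.
rewrite /C1 expRD; set mx := Num.max _ _.
rewrite (_ : _ * mx * _ = 4 * M * d0 * expR A * (mx * expR (C3 * T))); last by ring.
by rewrite ler_wpM2l // max_c_lstar_le.
Qed.

End observability.

Theorem theorem2p1 (R : realType) (X Y : completeNormedModType R)
  (C : {linear X -> Y}) (S : R -> {linear X -> X}) (M w : R)
  (lstar : R) (P : R -> {linear X -> X})
  (d0 d1 g1 d2 d3 g2 g3 T : R) :
  bounded_op C ->
  C0_semigroup S ->
  1 <= M ->
  (forall t, 0 <= t -> forall x, `|S t x| <= M * expR (w * t) * `|x|) ->
  0 <= lstar ->
  (forall l, lstar < l -> bounded_op (P l)) ->
  0 < d0 -> 0 < d1 -> 0 < g1 ->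
  (forall x l, lstar < l ->
     `|P l x| <= d0 * expR (d1 * l `^ g1) * `|C (P l x)|) ->
  1 <= d2 -> 0 < d3 -> 0 < g2 -> 0 < g3 -> 0 < T -> g1 < g2 ->
  (forall x l t, lstar < l -> 0 < t -> t <= T / 2 ->
     `|S t x - P l (S t x)| <= d2 * expR (- (d3 * l `^ g2 * t `^ g3)) * `|x|) ->
  let C1 := 4 * M * d0 *
      Num.max ((4 * d2 * M ^+ 2 * (d0 * opnorm C + 1)) `^ (8 / (expR 1 * ln 2)))
              (expR (4 * d1 * (2 * lstar) `^ g1)) in
  let C2 := 4 * (2 `^ g1 * (2 * 4 `^ g3) `^ (g1 * g2 / (g2 - g1))
                 * d1 `^ g2 / d3 `^ g1) `^ (1 / (g2 - g1)) in
  let C3 := Num.max w 0 * (1 + 10 / (expR 1 * ln 2)) in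
  forall (r : \bar R) (x : X), (1 <= r)%E ->
    let Cobs := C1 / Tpow T r * expR (C2 / T `^ (g1 * g3 / (g2 - g1)) + C3 * T) in
    ((`|S T x|)%:E <= Cobs%:E * Lnorm (leb0T T) r (fun tau => (`|C (S tau x)|)%:E))%E.
Proof.
move=> C_bdd [_ _ S_add _] M_ge1 S_le lstar_ge0 _ d0_gt0 d1_gt0 g1_gt0 P_obs
  d2_ge1 d3_gt0 _ g3_gt0 T_gt0 g12 P_tail C1 C2 C3 r x r1; cbv zeta.
have nC_ge0 := opnorm_ge0 C_bdd; have C_le := opnorm_le C_bdd.
have obs_le := norm_S_T_le nC_ge0 C_le S_add S_le M_ge1 d0_gt0 d1_gt0 d2_ge1 d3_gt0
  g1_gt0 g12 g3_gt0 T_gt0 lstar_ge0 P_obs P_tail r1.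
have const_le := dyadic_constant_le w d3 g2 g3 nC_ge0 M_ge1 d0_gt0 d1_gt0 d2_ge1
  g1_gt0 T_gt0 lstar_ge0.
have Tpow_gt0 := Tpow_gt0 r T_gt0.
case L_eq : (Lnorm _ _ _) => [Lr| |].
- rewrite -EFinM lee_fin; apply: le_trans (obs_le _ _ L_eq) _.
  have Lr_ge0 : 0 <= Lr by rewrite -lee_fin -L_eq Lnorm_ge0.
  set E := expR (C2 / _ + _).
  rewrite (_ : C1 / _ * E * Lr = C1 * E * (Lr / Tpow T r)); last by ring.
  by rewrite ler_wpM2r // divr_ge0 // ltW.
- have C1_gt0 : 0 < C1.
    apply: mulr_gt0; last by rewrite lt_max expR_gt0 orbT.
    by rewrite !mulr_gt0 // (lt_le_trans ltr01 M_ge1).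
  by rewrite gt0_muley ?leey // lte_fin mulr_gt0 ?divr_gt0 ?expR_gt0.
- by have := Lnorm_ge0 (leb0T T) r (fun tau => (`|C (S tau x)|)%:E); rewrite L_eq.
Qed.
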